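(* Let $\gamma\in\mathbb{C}$ with $\Re\gamma>0$ and $\Im\gamma<0$, and let $N>|\gamma|/\pi$ be an integer. Then the integral \[ \int_{\mathcal{R}}\frac{e^{(2z-1)x}}{x\sinh(x)\sinh(\gamma x/N)}\,dx \] converges if $-\frac{\Re\gamma}{2N}<\Re z<1+\frac{\Re\gamma}{2N}$.
   Context: $\mathcal{R}:=(-\infty,-1]\cup\{w\in\mathbb{C}:|w|=1,\Im w\ge0\}\cup[1,\infty)$, oriented from $-\infty$ to $\infty$. *)

From Stdlib Require Import Reals.
From Coquelicot Require Import Coquelicot.
Open Scope R_scope.

Definition Cexp (w : C) : C :=
  (exp (Re w) * cos (Im w), exp (Re w) * sin (Im w)).

Definition Csinh (w : C) : C := ((Cexp w - Cexp (- w)) / 2)%C.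

Definition integrand (gamma z : C) (N : nat) (x : C) : C :=
  (Cexp ((2 * z - 1) * x) / (x * Csinh x * Csinh (gamma * x / RtoC (INR N))))%C.

(* Convergence of the integral along the contour
   R = (-oo,-1] ∪ {|w|=1, Im w >= 0} ∪ [1,+oo), oriented from -oo to +oo:
   - improper Riemann integral over (-oo,-1] converges,
   - the arc integral, parametrized w = e^{i t}, t from PI down to 0,
     dw = i e^{i t} dt, exists,
   - improper Riemann integral over [1,+oo) converges. *)
Definition contour_R_converges (f : C -> C) : Prop :=
  ex_RInt_gen (fun x : R => f (RtoC x)) (Rbar_locally m_infty) (at_point (-1))
  /\ ex_RInt (fun t : R => (f (Cexp (0, t)) * (Ci * Cexp (0, t)))%C) PI 0
  /\ ex_RInt_gen (fun x : R => f (RtoC x)) (at_point 1) (Rbar_locally p_infty).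

From Stdlib Require Import Reals Lra.
From Coquelicot Require Import Coquelicot.
Open Scope R_scope.

(* On the rays, |sinh w| >= |sinh (Re w)| >= k e^|Re w| once |Re w| is bounded away
   from 0, so for |x| >= 1 the integrand is O(e^((2 Re z - 1) x - (1 + Re gamma / N) |x|)),
   which decays exponentially at both ends exactly under the hypothesis on Re z; a
   continuous function with such a majorant has a convergent improper integral, by the
   Cauchy criterion, because the primitive of the majorant tends to 0.  On the arc the
   integrand is continuous: sinh vanishes only on i pi Z, while |w| = 1 < pi and
   |gamma w / N| = |gamma| / N < pi. *)

Section ImproperIntegrals.

Context {V : CompleteNormedModule R_AbsRing}.

Lemma ex_RInt_gen_swap (Fa Fb : (R -> Prop) -> Prop) {FFa : Filter Fa} {FFb : Filter Fb}
    (f : R -> V) :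
  ex_RInt_gen f Fb Fa -> ex_RInt_gen f Fa Fb.
Proof. intros [l Hl]. exists (opp l). now apply is_RInt_gen_swap. Qed.

Lemma ex_RInt_gen_at_point_cauchy (F : (R -> Prop) -> Prop) {FF : ProperFilter F}
    (f : R -> V) (a : R) :
  F (fun b => ex_RInt f a b) ->
  (forall eps : posreal, exists P, F P /\
     forall b1 b2, P b1 -> P b2 -> norm (RInt f b1 b2) < eps) ->
  ex_RInt_gen f (at_point a) F.
Proof.
  intros Hex Hcauchy.
  set (P0 := fun ab : R * R => fst ab = a /\ ex_RInt f a (snd ab)).
  assert (HP0 : filter_prod (at_point a) F P0).
  { apply (Filter_prod _ _ _ (fun x => x = a) (fun b => ex_RInt f a b)); auto.
    - reflexivity.
    - intros x y -> Hy. now split. }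
  refine (proj1 (Hierarchy.filterlimi_locally_cauchy (F := filter_prod (at_point a) F)
                  (fun ab l => is_RInt f (fst ab) (snd ab) l) _) _).
  - apply (filter_imp P0); auto.
    intros [a' b] [Ha Hb]; simpl in Ha, Hb |- *; subst a'. split.
    + exists (RInt f a b). now apply RInt_correct.
    + intros l1 l2 H1 H2.
      now rewrite <- (is_RInt_unique _ _ _ _ H1), <- (is_RInt_unique _ _ _ _ H2).
  - intros eps. destruct (Hcauchy eps) as [P [HP HPbound]].
    exists (fun ab => P0 ab /\ P (snd ab)). split.
    + apply filter_and; auto.
      apply (Filter_prod _ _ _ (fun _ => True) P); auto. apply filter_true.
    + intros [u1 u2] [v1 v2] [[Hu1 Hu2] Hu] [[Hv1 Hv2] Hv] lu lv Hlu Hlv.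
      simpl in *; subst u1 v1.
      apply (@norm_compat1 R_AbsRing V).
      rewrite <- (is_RInt_unique _ _ _ _ Hlu), <- (is_RInt_unique _ _ _ _ Hlv).
      replace (minus _ _) with (RInt f u2 v2).
      { now apply HPbound. }
      rewrite <- (RInt_Chasles f u2 a v2), <- (opp_RInt_swap f a u2), plus_comm;
        try easy.
      now apply ex_RInt_swap.
Qed.

Variables (D : R -> Prop) (f : R -> V) (g G : R -> R).
Hypothesis f_cont : forall x, D x -> continuous f x.
Hypothesis f_le_g : forall x, D x -> norm (f x) <= g x.
Hypothesis G_prim : forall x, D x -> is_derive G x (g x).
Hypothesis g_cont : forall x, D x -> continuous g x.

Lemma norm_RInt_le_primitive (b1 b2 : R) :
  (forall x, Rmin b1 b2 <= x <= Rmax b1 b2 -> D x) ->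
  norm (RInt f b1 b2) <= Rabs (G b2 - G b1).
Proof.
  assert (Hle : forall b1 b2, b1 <= b2 -> (forall x, b1 <= x <= b2 -> D x) ->
            norm (RInt f b1 b2) <= G b2 - G b1).
  { intros c1 c2 Hc HD.
    apply (norm_RInt_le f g c1 c2); auto.
    - apply RInt_correct, ex_RInt_continuous. intros x Hx.
      rewrite Rmin_left, Rmax_right in Hx by exact Hc. auto.
    - apply (is_RInt_derive G g); intros x Hx;
        rewrite Rmin_left, Rmax_right in Hx by exact Hc; auto. }
  intros HD. destruct (Rle_or_lt b1 b2) as [Hb | Hb].
  - rewrite Rmin_left, Rmax_right in HD by exact Hb.
    eapply Rle_trans; [apply Hle|apply Rle_abs]; auto.
  - rewrite Rmin_right, Rmax_left in HD by lra.
    rewrite <- (opp_RInt_swap f b2 b1), (@norm_opp R_AbsRing V), Rabs_minus_sym.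
    + eapply Rle_trans; [apply Hle|apply Rle_abs]; auto; lra.
    + apply ex_RInt_continuous. intros x Hx. apply f_cont, HD.
      now rewrite Rmin_left, Rmax_right in Hx by lra.
Qed.

Lemma ex_RInt_gen_majorant (F : (R -> Prop) -> Prop) {FF : ProperFilter F} (a : R) :
  F (fun b => forall x, Rmin a b <= x <= Rmax a b -> D x) ->
  filterlim G F (locally 0) ->
  ex_RInt_gen f (at_point a) F.
Proof.
  intros HD HG.
  apply (ex_RInt_gen_at_point_cauchy F).
  { eapply filter_imp; [|exact HD]. intros b Hb.
    apply ex_RInt_continuous. intros x Hx. now apply f_cont, Hb. }
  intros eps.
  assert (Hsmall : F (fun b => Rabs (G b) < eps / 2)).
  { apply (HG (fun y => Rabs y < eps / 2)). exists (pos_div_2 eps). intros y Hy.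
    change (Rabs (y + - 0) < eps / 2) in Hy. now rewrite Ropp_0, Rplus_0_r in Hy. }
  eexists. split; [exact (filter_and _ _ HD Hsmall)|].
  intros b1 b2 [HD1 H1] [HD2 H2].
  eapply Rle_lt_trans.
  - apply norm_RInt_le_primitive. intros x Hx.
    assert (Hcover : Rmin a b1 <= x <= Rmax a b1 \/ Rmin a b2 <= x <= Rmax a b2)
      by (unfold Rmin, Rmax in *; repeat destruct Rle_dec; lra).
    destruct Hcover; auto.
  - pose proof (Rabs_triang (G b2) (- G b1)) as Htri.
    rewrite Rabs_Ropp in Htri. unfold Rminus. lra.
Qed.

End ImproperIntegrals.

Lemma filterlim_scal_exp_0 (F : (R -> Prop) -> Prop) {FF : Filter F} (K c : R) :
  filterlim (fun x => c * x) F (Rbar_locally m_infty) ->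
  filterlim (fun x => K * exp (c * x)) F (locally 0).
Proof.
  intros Hlin.
  apply filterlim_comp with (f := fun x => exp (c * x)) (g := Rmult K) (G := locally 0).
  - exact (filterlim_comp _ _ _ (fun x => c * x) exp _ _ _ Hlin is_lim_exp_m).
  - pose proof (filterlim_Rbar_mult_l K 0) as HK. simpl in HK.
    now rewrite Rmult_0_r in HK.
Qed.

Lemma is_derive_scal_exp (c K x : R) : c <> 0 ->
  is_derive (fun y => K / c * exp (c * y)) x (K * exp (c * x)).
Proof. intros Hc. auto_derive; [easy|]. field. exact Hc. Qed.

Section ExponentialTails.

Context {V : CompleteNormedModule R_AbsRing}.
Variables (f : R -> V) (a M c : R).
Hypothesis c_pos : 0 < c.

Lemma ex_RInt_gen_exp_decay_p_infty :
  (forall x, a <= x -> continuous f x) ->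
  (forall x, a <= x -> norm (f x) <= M * exp (- c * x)) ->
  ex_RInt_gen f (at_point a) (Rbar_locally p_infty).
Proof.
  intros Hcont Hbound.
  refine (ex_RInt_gen_majorant (fun x => a <= x) f (fun x => M * exp (- c * x))
            (fun x => M / (- c) * exp (- c * x)) Hcont Hbound _ _
            (Rbar_locally p_infty) a _ _).
  - intros x _. apply is_derive_scal_exp. lra.
  - intros x _. apply (ex_derive_continuous (fun x => M * exp (- c * x))).
    auto_derive; easy.
  - exists a. intros b Hb x Hx. rewrite Rmin_left in Hx; lra.
  - apply (filterlim_scal_exp_0 (Rbar_locally p_infty)).
    pose proof (filterlim_Rbar_mult_l (- c) p_infty) as Hlin.
    unfold Rbar_mult, Rbar_mult' in Hlin. destruct (Rle_dec 0 (- c)); [lra|exact Hlin].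
Qed.

Lemma ex_RInt_gen_exp_decay_m_infty :
  (forall x, x <= a -> continuous f x) ->
  (forall x, x <= a -> norm (f x) <= M * exp (c * x)) ->
  ex_RInt_gen f (Rbar_locally m_infty) (at_point a).
Proof.
  intros Hcont Hbound.
  apply (ex_RInt_gen_swap (Rbar_locally m_infty) (at_point a)).
  refine (ex_RInt_gen_majorant (fun x => x <= a) f (fun x => M * exp (c * x))
            (fun x => M / c * exp (c * x)) Hcont Hbound _ _
            (Rbar_locally m_infty) a _ _).
  - intros x _. apply is_derive_scal_exp. lra.
  - intros x _. apply (ex_derive_continuous (fun x => M * exp (c * x))).
    auto_derive; easy.
  - exists a. intros b Hb x Hx. rewrite Rmax_left in Hx; lra.
  - apply (filterlim_scal_exp_0 (Rbar_locally m_infty)).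
    pose proof (filterlim_Rbar_mult_l c m_infty) as Hlin.
    unfold Rbar_mult, Rbar_mult' in Hlin.
    destruct (Rle_dec 0 c); [|lra]. destruct (Rle_lt_or_eq_dec 0 c r); [exact Hlin|lra].
Qed.

End ExponentialTails.

Section ComplexComponents.

Variables (f : R -> C) (x : R).

Lemma continuous_C_intro :
  continuous (fun t => Re (f t)) x -> continuous (fun t => Im (f t)) x -> continuous f x.
Proof.
  intros Hre Him.
  apply (continuous_ext (fun t => (Re (f t), Im (f t)))).
  { intros t. now destruct (f t). }
  apply (continuous_comp_2 _ _ pair); [exact Hre | exact Him |].
  apply (continuous_ext (fun p => p)); [now intros [] | apply continuous_id].
Qed.

Lemma continuous_Re : continuous f x -> continuous (fun t => Re (f t)) x.
Proof.
  intros Hf. apply (continuous_comp f fst); [exact Hf|].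
  destruct (f x). apply continuous_fst.
Qed.

Lemma continuous_Im : continuous f x -> continuous (fun t => Im (f t)) x.
Proof.
  intros Hf. apply (continuous_comp f snd); [exact Hf|].
  destruct (f x). apply continuous_snd.
Qed.

End ComplexComponents.

Section ComplexContinuity.

Variables (f g : R -> C) (x : R).
Hypotheses (Hf : continuous f x) (Hg : continuous g x).

Let Hfre := continuous_Re f x Hf.
Let Hfim := continuous_Im f x Hf.
Let Hgre := continuous_Re g x Hg.
Let Hgim := continuous_Im g x Hg.

Lemma continuous_Cplus : continuous (fun t => f t + g t)%C x.
Proof.
  apply continuous_C_intro; simpl.
  - exact (continuous_plus _ _ _ Hfre Hgre).
  - exact (continuous_plus _ _ _ Hfim Hgim).
Qed.

Lemma continuous_Copp : continuous (fun t => - f t)%C x.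
Proof.
  apply continuous_C_intro; simpl.
  - exact (continuous_opp _ _ Hfre).
  - exact (continuous_opp _ _ Hfim).
Qed.

Lemma continuous_Cmult : continuous (fun t => f t * g t)%C x.
Proof.
  apply continuous_C_intro; simpl.
  - apply (continuous_minus (fun t => Re (f t) * Re (g t)) (fun t => Im (f t) * Im (g t)));
      now apply (continuous_mult (K := R_AbsRing)).
  - apply (continuous_plus (fun t => Re (f t) * Im (g t)) (fun t => Im (f t) * Re (g t)));
      now apply (continuous_mult (K := R_AbsRing)).
Qed.

Lemma continuous_Cexp : continuous (fun t => Cexp (f t)) x.
Proof.
  apply continuous_C_intro; simpl; apply (continuous_mult (K := R_AbsRing)).
  - now apply continuous_exp_comp.
  - exact (continuous_comp _ cos _ Hfim (continuous_cos _)).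
  - now apply continuous_exp_comp.
  - exact (continuous_comp _ sin _ Hfim (continuous_sin _)).
Qed.

Lemma continuous_Cinv : f x <> 0%C -> continuous (fun t => / f t)%C x.
Proof.
  intros Hnz.
  set (d := fun t => Re (f t) ^ 2 + Im (f t) ^ 2).
  assert (Hd : d x <> 0).
  { intros E. apply Hnz. unfold d in E. destruct (f x) as [a b]; simpl in E.
    apply injective_projections; simpl; nra. }
  assert (Hdcont : continuous (fun t => / d t) x).
  { apply continuous_Rinv_comp; [|exact Hd].
    unfold d; simpl.
    apply (continuous_plus (fun t => Re (f t) * (Re (f t) * 1))
                           (fun t => Im (f t) * (Im (f t) * 1)));
      repeat apply (continuous_mult (K := R_AbsRing)); auto using continuous_const. }
  apply continuous_C_intro; simpl; apply (continuous_mult (K := R_AbsRing)); auto.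
  exact (continuous_opp (fun t => Im (f t)) x Hfim).
Qed.

End ComplexContinuity.

Lemma continuous_Cdiv (f g : R -> C) (x : R) :
  continuous f x -> continuous g x -> g x <> 0%C -> continuous (fun t => f t / g t)%C x.
Proof. intros Hf Hg Hnz. apply continuous_Cmult; [exact Hf|]. now apply continuous_Cinv. Qed.

Lemma continuous_Csinh (f : R -> C) (x : R) :
  continuous f x -> continuous (fun t => Csinh (f t)) x.
Proof.
  intros Hf. unfold Csinh.
  apply (continuous_Cdiv _ (fun _ => 2%C)).
  - apply continuous_Cplus; [now apply continuous_Cexp|].
    now apply continuous_Copp, continuous_Cexp, continuous_Copp.
  - apply continuous_const.
  - intros E. injection E. lra.
Qed.

Lemma continuous_integrand_comp (gamma z : C) (N : nat) (phi : R -> C) (t : R) :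
  continuous phi t -> INR N <> 0 -> phi t <> 0%C ->
  Csinh (phi t) <> 0%C -> Csinh (gamma * phi t / RtoC (INR N)) <> 0%C ->
  continuous (fun s => integrand gamma z N (phi s)) t.
Proof.
  intros Hphi HN H0 Hsinh1 Hsinh2. unfold integrand.
  assert (Hconst : forall c : C, continuous (fun _ : R => c) t)
    by (intros; apply continuous_const).
  apply continuous_Cdiv.
  - apply continuous_Cexp, continuous_Cmult; auto.
  - apply continuous_Cmult; [apply continuous_Cmult|]; [exact Hphi| |];
      apply continuous_Csinh; [exact Hphi|].
    apply (continuous_Cdiv (fun s => gamma * phi s)%C); [apply continuous_Cmult; auto | auto |].
    intros E. injection E. lra.
  - apply Cmult_neq_0; [apply Cmult_neq_0|]; assumption.
Qed.

Lemma Cmod_Cexp (w : C) : Cmod (Cexp w) = exp (Re w).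
Proof.
  unfold Cmod, Cexp; cbn [fst snd].
  replace ((exp (Re w) * cos (Im w)) ^ 2 + (exp (Re w) * sin (Im w)) ^ 2)
    with (exp (Re w) ^ 2) by (pose proof (sin2_cos2 (Im w)); unfold Rsqr in *; nra).
  apply sqrt_pow2, Rlt_le, exp_pos.
Qed.

Lemma Csinh_components (w : C) :
  Csinh w = (sinh (Re w) * cos (Im w), cosh (Re w) * sin (Im w)).
Proof.
  unfold Csinh, Cexp, sinh, cosh, Cdiv, Cminus; simpl. rewrite cos_neg, sin_neg.
  apply injective_projections; simpl; unfold Re, Im; field.
Qed.

Lemma Csinh_eq_0 (w : C) : Csinh w = 0%C -> Re w = 0 /\ sin (Im w) = 0.
Proof.
  rewrite Csinh_components. intros E. injection E as Ere Eim.
  assert (Hcosh : 0 < cosh (Re w)).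
  { unfold cosh. pose proof (exp_pos (Re w)). pose proof (exp_pos (- Re w)). lra. }
  assert (Hsin : sin (Im w) = 0) by nra.
  split; [|exact Hsin].
  assert (Hcos : cos (Im w) <> 0).
  { intros Hcos. pose proof (sin2_cos2 (Im w)) as H. unfold Rsqr in H.
    rewrite Hsin, Hcos in H. lra. }
  assert (Hsinh : sinh (Re w) = 0) by (apply Rmult_integral in Ere; tauto).
  destruct (Rtotal_order (Re w) 0) as [Hlt | [Heq | Hgt]]; [| exact Heq |].
  - pose proof (sinh_lt _ _ Hlt). rewrite sinh_0 in *. lra.
  - pose proof (sinh_lt _ _ Hgt). rewrite sinh_0 in *. lra.
Qed.

Lemma Csinh_neq_0_of_Re (w : C) : Re w <> 0 -> Csinh w <> 0%C.
Proof. intros Hre E. now apply Hre, Csinh_eq_0. Qed.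

Lemma Csinh_neq_0_of_Cmod (w : C) : 0 < Cmod w < PI -> Csinh w <> 0%C.
Proof.
  intros [Hpos Hlt] E. destruct (Csinh_eq_0 w E) as [Hre Hsin].
  destruct w as [a b]; simpl in Hre, Hsin; subst a.
  unfold Cmod in Hpos, Hlt; cbn [fst snd] in Hpos, Hlt.
  replace (0 ^ 2 + b ^ 2) with (b²) in Hpos, Hlt by (unfold Rsqr; ring).
  rewrite sqrt_Rsqr_abs in Hpos, Hlt.
  destruct (Rle_or_lt 0 b).
  - rewrite Rabs_right in Hpos, Hlt by lra.
    pose proof (sin_gt_0 b Hpos Hlt). lra.
  - rewrite Rabs_left in Hpos, Hlt by lra.
    pose proof (sin_gt_0 (- b) Hpos Hlt). rewrite sin_neg in *. lra.
Qed.

Lemma Rabs_sinh_le_Cmod_Csinh (w : C) : Rabs (sinh (Re w)) <= Cmod (Csinh w).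
Proof.
  rewrite Csinh_components. unfold Cmod; cbn [fst snd].
  rewrite <- sqrt_Rsqr_abs. apply sqrt_le_1_alt.
  assert (Hexp : exp (Re w) * exp (- Re w) = 1)
    by (rewrite <- exp_plus, Rplus_opp_r; apply exp_0).
  pose proof (sin2_cos2 (Im w)). unfold Rsqr, sinh, cosh in *. nra.
Qed.

Lemma Rabs_sinh_ge_exp (r : R) : 0 < r ->
  exists k, 0 < k /\ forall a, r <= Rabs a -> k * exp (Rabs a) <= Rabs (sinh a).
Proof.
  intros Hr. exists ((1 - exp (- (2 * r))) / 2). split.
  - assert (exp (- (2 * r)) < 1) by (rewrite <- exp_0; apply exp_increasing; lra). lra.
  - intros a Ha.
    assert (Hodd : Rabs (sinh a) = sinh (Rabs a)).
    { assert (Hsinh_pos : forall b, 0 <= b -> 0 <= sinh b).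
      { intros b [Hb | <-]; [|rewrite sinh_0; lra].
        pose proof (sinh_lt _ _ Hb). rewrite sinh_0 in *. lra. }
      destruct (Rle_or_lt 0 a) as [Hpos | Hneg].
      - rewrite (Rabs_right a) by lra. apply Rabs_right, Rle_ge, Hsinh_pos, Hpos.
      - rewrite (Rabs_left a) by lra.
        replace (sinh a) with (- sinh (- a)) by (unfold sinh; rewrite Ropp_involutive; field).
        rewrite Rabs_Ropp. apply Rabs_right, Rle_ge, Hsinh_pos. lra. }
    rewrite Hodd. unfold sinh.
    replace (exp (- Rabs a)) with (exp (Rabs a) * exp (- (2 * Rabs a)))
      by (rewrite <- exp_plus; f_equal; ring).
    assert (exp (- (2 * Rabs a)) <= exp (- (2 * r))).
    { destruct (Rle_lt_or_eq_dec r (Rabs a) Ha) as [Hlt | Heq].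
      - apply Rlt_le, exp_increasing. lra.
      - rewrite Heq. lra. }
    pose proof (exp_pos (Rabs a)). nra.
Qed.

Lemma integrand_exp_bound (gamma z : C) (N : nat) : 0 < Re gamma -> 0 < INR N ->
  exists M, forall x : R, 1 <= Rabs x ->
    Cmod (integrand gamma z N x) <=
      M * exp ((2 * Re z - 1) * x - (1 + Re gamma / INR N) * Rabs x).
Proof.
  intros Hgamma HN. set (r := Re gamma / INR N).
  assert (Hr : 0 < r) by (apply Rdiv_lt_0_compat; assumption).
  destruct (Rabs_sinh_ge_exp 1 Rlt_0_1) as [k1 [Hk1 Hsinh1]].
  destruct (Rabs_sinh_ge_exp r Hr) as [kr [Hkr Hsinhr]].
  exists (/ (k1 * kr)). intros x Hx.
  set (E := (2 * Re z - 1) * x).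
  assert (Hnum : Re ((2 * z - 1) * RtoC x)%C = E) by (unfold E, Re; simpl; ring).
  assert (Harg : Re (gamma * RtoC x / RtoC (INR N))%C = r * x).
  { unfold r, Re, Cdiv, Cmult, Cinv, RtoC; simpl. field. lra. }
  assert (Hden1 : k1 * exp (Rabs x) <= Cmod (Csinh x)).
  { eapply Rle_trans; [apply Hsinh1, Hx | apply (Rabs_sinh_le_Cmod_Csinh (RtoC x))]. }
  assert (Hden2 : kr * exp (r * Rabs x) <= Cmod (Csinh (gamma * RtoC x / RtoC (INR N)))).
  { eapply Rle_trans; [|apply Rabs_sinh_le_Cmod_Csinh]. rewrite Harg.
    assert (Habs : Rabs (r * x) = r * Rabs x)
      by (rewrite Rabs_mult, (Rabs_right r) by lra; reflexivity).
    rewrite <- Habs. apply Hsinhr. rewrite Habs. nra. }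
  pose proof (exp_pos (Rabs x)). pose proof (exp_pos (r * Rabs x)). pose proof (exp_pos E).
  set (D := k1 * exp (Rabs x) * (kr * exp (r * Rabs x))).
  assert (HD : 0 < D) by (unfold D; repeat apply Rmult_lt_0_compat; assumption).
  assert (Hden : D <= Cmod (RtoC x * Csinh x * Csinh (gamma * RtoC x / RtoC (INR N)))).
  { rewrite !Cmod_mult, Cmod_R. unfold D.
    apply (Rle_trans _ (Cmod (Csinh x) * Cmod (Csinh (gamma * RtoC x / RtoC (INR N))))).
    - apply Rmult_le_compat; nra.
    - rewrite Rmult_assoc.
      assert (0 <= Cmod (Csinh x) * Cmod (Csinh (gamma * RtoC x / RtoC (INR N))))
        by (apply Rmult_le_pos; apply Cmod_ge_0).
      nra. }
  replace (/ (k1 * kr) * exp (E - (1 + r) * Rabs x)) with (exp E / D).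
  2:{ unfold D. replace (E - (1 + r) * Rabs x) with (E + - Rabs x + - (r * Rabs x)) by ring.
      rewrite !exp_plus, !exp_Ropp. field. repeat split; apply Rgt_not_eq; assumption. }
  unfold integrand. rewrite Cmod_div, Cmod_Cexp, Hnum.
  - apply Rmult_le_compat_l; [lra|]. apply Rinv_le_contravar; assumption.
  - apply Cmod_gt_0. lra.
Qed.

Lemma continuous_integrand_real (gamma z : C) (N : nat) (x : R) :
  0 < Re gamma -> 0 < INR N -> x <> 0 ->
  continuous (fun t : R => integrand gamma z N t) x.
Proof.
  intros Hgamma HN Hx. apply continuous_integrand_comp.
  - apply continuous_C_intro; [apply continuous_id | apply continuous_const].
  - lra.
  - intros E. injection E. exact Hx.
  - now apply Csinh_neq_0_of_Re.
  - apply Csinh_neq_0_of_Re.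
    replace (Re (gamma * RtoC x / RtoC (INR N))%C) with (Re gamma * x / INR N)
      by (unfold Re, Cdiv, Cmult, Cinv, RtoC; simpl; field; lra).
    apply Rmult_integral_contrapositive_currified; [|apply Rinv_neq_0_compat; lra].
    apply Rmult_integral_contrapositive_currified; lra.
Qed.

Lemma continuous_integrand_arc (gamma z : C) (N : nat) (t : R) :
  0 < INR N -> 0 < Cmod gamma / INR N < PI ->
  continuous (fun s => integrand gamma z N (Cexp (0, s)) * (Ci * Cexp (0, s)))%C t.
Proof.
  intros HN Hgamma.
  assert (Hunit : forall s, Cmod (Cexp (0, s)) = 1) by (intros; rewrite Cmod_Cexp; apply exp_0).
  assert (Hcont : continuous (fun s => Cexp (0, s)) t).
  { apply continuous_Cexp, continuous_C_intro; [apply continuous_const | apply continuous_id]. }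
  apply continuous_Cmult.
  - apply continuous_integrand_comp; [exact Hcont | lra | | |].
    + apply Cmod_gt_0. rewrite Hunit. lra.
    + apply Csinh_neq_0_of_Cmod. rewrite Hunit. pose proof PI2_1. lra.
    + apply Csinh_neq_0_of_Cmod.
      rewrite Cmod_div by (intros E; injection E; lra).
      rewrite Cmod_mult, Hunit, Cmod_R, Rabs_right, Rmult_1_r by lra.
      exact Hgamma.
  - apply continuous_Cmult; [apply continuous_const | exact Hcont].
Qed.

Theorem lemma2p1 (gamma : C) (N : nat) (z : C) :
  0 < Re gamma -> Im gamma < 0 ->
  Cmod gamma / PI < INR N ->
  - (Re gamma / (2 * INR N)) < Re z < 1 + Re gamma / (2 * INR N) ->
  contour_R_converges (integrand gamma z N).
Proof.
  intros Hre _ HN Hz.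
  pose proof PI_RGT_0 as HPI.
  assert (Hgamma : 0 < Cmod gamma).
  { apply Cmod_gt_0. intros E. rewrite E in Hre. simpl in Hre. lra. }
  assert (Hn : 0 < INR N)
    by (apply (Rlt_trans _ (Cmod gamma / PI)); [apply Rdiv_lt_0_compat|]; assumption).
  destruct (integrand_exp_bound gamma z N Hre Hn) as [M HM].
  set (r := Re gamma / INR N) in HM.
  replace (Re gamma / (2 * INR N)) with (r / 2) in Hz by (unfold r; field; lra).
  split; [|split].
  - apply (@ex_RInt_gen_exp_decay_m_infty C_R_CompleteNormedModule _ (-1) M (2 * Re z + r));
      [lra| |].
    + intros x Hx. apply continuous_integrand_real; auto. lra.
    + intros x Hx. rewrite <- Cmod_norm.
      replace ((2 * Re z + r) * x) with ((2 * Re z - 1) * x - (1 + r) * Rabs x)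
        by (rewrite Rabs_left by lra; ring).
      apply HM. rewrite Rabs_left; lra.
  - apply (@ex_RInt_continuous C_R_CompleteNormedModule). intros t _.
    apply continuous_integrand_arc; [exact Hn|].
    split; [now apply Rdiv_lt_0_compat|].
    apply Rlt_div_l; [exact Hn|]. rewrite Rmult_comm. now apply Rlt_div_l.
  - apply (@ex_RInt_gen_exp_decay_p_infty C_R_CompleteNormedModule _ 1 M (2 + r - 2 * Re z));
      [lra| |].
    + intros x Hx. apply continuous_integrand_real; auto. lra.
    + intros x Hx. rewrite <- Cmod_norm.
      replace (- (2 + r - 2 * Re z) * x) with ((2 * Re z - 1) * x - (1 + r) * Rabs x)
        by (rewrite Rabs_right by lra; ring).
      apply HM. rewrite Rabs_right; lra.
Qed.
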